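(* Let $T$ be a tree and $u\in V(T)$ a vertex with $d_T(u)\ge 3$ that is adjacent to a leaf $v$ of $T$. Let $T'$ be any tree obtained by smoothing $u$ in $T-v$. Then $b(T)\le b(T')+1$; more precisely, $T$ has a burning sequence of length at most $b(T')+1$ whose first term is $v$.
   Context: All graphs are finite and simple. $T-v$ is the tree obtained by deleting $v$ and its incident edge. Smoothing: let $S$ be a tree and $w\in V(S)$ with $N_S(w)=\{w_1,\dots,w_q\}$, $q\ge 2$, and suppose exactly $p$ of these neighbours are leaves of $S$, labelled $w_1,\dots,w_p$ (if $p>0$); the remaining neighbours are labelled arbitrarily. A tree obtained by smoothing $w$ in $S$ is formed from $S$ by deleting $w$ (and its incident edges) and then: if $p\le 2$, adding the edges of the path $w_1w_3w_4\cdots w_qw_2$; if $p\ge 3$, additionally deleting $w_3,\dots,w_p$ and adding the edges of the path $w_1w_{p+1}w_{p+2}\cdots w_qw_2$. Burning process of a connected graph $G$: initially all vertices are unburned. In each round $r\ge 1$, one vertex $x_r$ that is unburned at the end of round $r-1$ is chosen as the source of round $r$; in round $r$ the source $x_r$ becomes burned, and so does every vertex that was unburned at the end of round $r-1$ and is adjacent to a vertex burned at the end of round $r-1$. Burned vertices stay burned. If all vertices are burned at the end of round $k$ (and not earlier), $(x_1,\dots,x_k)$ is called a burning sequence for $G$ of length $k$. The burning number $b(G)$ is the minimum length of a burning sequence for $G$. *)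

From mathcomp Require Import all_boot.
Set Implicit Arguments. Unset Strict Implicit. Unset Printing Implicit Defensive.

(* A finite simple graph is a pair (S, e): vertex set S : {set V} inside an
   ambient finType V, and a symmetric irreflexive edge relation e : rel V
   whose edges lie inside S. *)
Section Graphs.
Variable V : finType.

Definition graph_on (S : {set V}) (e : rel V) : Prop :=
  [/\ symmetric e, irreflexive e & forall x y, e x y -> (x \in S) && (y \in S)].

Definition connected_on (S : {set V}) (e : rel V) : Prop :=
  forall x y, x \in S -> y \in S ->
    connect [rel a b | [&& a \in S, b \in S & e a b]] x y.

Definition acyclic_on (S : {set V}) (e : rel V) : Prop :=
  ~ exists c : seq V, [/\ uniq c, 3 <= size c, all (mem S) c & cycle e c].

Definition is_tree (S : {set V}) (e : rel V) : Prop :=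
  [/\ graph_on S e, S != set0, connected_on S e & acyclic_on S e].

Definition nbrs (S : {set V}) (e : rel V) (w : V) : {set V} :=
  [set y in S | e w y].
Definition deg (S : {set V}) (e : rel V) (w : V) : nat := #|nbrs S e w|.
Definition leaf (S : {set V}) (e : rel V) (x : V) : bool :=
  (x \in S) && (deg S e x == 1).

Definition del_rel (e : rel V) (v : V) : rel V :=
  [rel x y | [&& x != v, y != v & e x y]].

Definition path_edge (p : seq V) (x y : V) : bool :=
  ((x, y) \in zip p (behead p)) || ((y, x) \in zip p (behead p)).

(* (S', e') is a tree obtained by smoothing w in (S, e).
   s = [:: w_1; ...; w_q] lists N_S(w) without repetition, q >= 2, and its
   first p entries are exactly the neighbours that are leaves.
   If p <= 2 : delete w, add path w_1 w_3 ... w_q w_2.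
   If p >= 3 : also delete w_3..w_p, add path w_1 w_(p+1) ... w_q w_2.
   (Uniformly: delete w and drop 2 (take p s); path
    w_1 :: drop (max p 2) s ++ [:: w_2].) *)
Definition smoothing_of (S : {set V}) (e : rel V) (w : V)
    (S' : {set V}) (e' : rel V) : Prop :=
  w \in S /\
  exists (s : seq V) (p : nat),
    [/\ uniq s, [set x in s] = nbrs S e w, 2 <= size s & p <= size s] /\
    [/\ (forall i, i < size s -> leaf S e (nth w s i) = (i < p)),
        S' = (S :\ w) :\: [set x in drop 2 (take p s)] &
        forall x y, e' x y =
          [&& x \in S', y \in S' &
              e x y || path_edge (nth w s 0 :: drop (maxn p 2) s ++ [:: nth w s 1]) x y]].

Definition burn_step (S : {set V}) (e : rel V) (B : {set V}) (x : V) : {set V} :=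
  x |: (B :|: [set y in S | [exists z in B, e z y]]).

Definition burned (S : {set V}) (e : rel V) (xs : seq V) : {set V} :=
  foldl (burn_step S e) set0 xs.

Definition burning_seq (S : {set V}) (e : rel V) (xs : seq V) : Prop :=
  [/\ forall (i : nat) (d : V), i < size xs ->
        (nth d xs i \in S) /\ (nth d xs i \notin burned S e (take i xs)),
      burned S e xs = S &
      forall i, i < size xs -> burned S e (take i xs) != S].

Definition is_burning_number (S : {set V}) (e : rel V) (k : nat) : Prop :=
  (exists xs, burning_seq S e xs /\ size xs = k) /\
  (forall xs, burning_seq S e xs -> k <= size xs).

End Graphs.

(* Burn the leaf v first; u catches fire in the next round. Then replay a
   burning sequence of T' one round late. Every edge of T' that is not an edge
   of T joins two neighbours of u, and a neighbour of u is burned in T as soon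
   as u is, so the replay burns at least what T' burns at every round. The
   neighbours of u deleted by the smoothing burn in round 3, and b(T') >= 2
   because T' contains the two distinct vertices w_1, w_2. Sources of the
   replay that are already burned are finally exchanged for unburned ones. *)

From mathcomp Require Import all_boot.
From Stdlib Require Import Classical.
Set Implicit Arguments. Unset Strict Implicit. Unset Printing Implicit Defensive.

Lemma classical_ex_minn (P : nat -> Prop) n :
  P n -> exists m, [/\ P m, m <= n & forall k, P k -> m <= k].
Proof.
elim: n {-2}n (leqnn n) => [|N IH] n le_nN Pn.
  by exists n; split=> // k _; move: le_nN; rewrite leqn0 => /eqP->.
have [[k [lt_kn Pk]]|no_smaller] := classic (exists k, k < n /\ P k).
  have [m [Pm le_mk min_m]] := IH k (leq_trans lt_kn le_nN) Pk.
  by exists m; split=> //; apply: leq_trans le_mk (ltnW lt_kn).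
exists n; split=> // k Pk; rewrite leqNgt; apply/negP=> lt_kn.
by apply: no_smaller; exists k.
Qed.

Section Burning.
Variables (V : finType) (S : {set V}) (e : rel V).
Implicit Types (B : {set V}) (x y z : V) (xs ys zs : seq V).
Local Notation step := (burn_step S e).
Local Notation run := (foldl (burn_step S e)).

Lemma mem_burn_step_src B x : x \in step B x.
Proof. by rewrite !inE eqxx. Qed.

Lemma mem_burn_step_nbr [B x z y] : z \in B -> e z y -> y \in S -> y \in step B x.
Proof.
move=> zB ezy yS; rewrite !inE yS /=; apply/orP; right; apply/orP; right.
by apply/existsP; exists z; rewrite zB.
Qed.

Lemma burn_stepP B x y :
  y \in step B x -> [\/ y = x, y \in B | y \in S /\ exists2 z, z \in B & e z y].
Proof.
rewrite !inE => /or3P[/eqP->|yB|/andP[yS /existsP[z /andP[zB ezy]]]].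
- by constructor 1.
- by constructor 2.
- by constructor 3; split=> //; exists z.
Qed.

Lemma burn_step_set0 x : step set0 x = [set x].
Proof.
by apply/setP=> y; apply/idP/idP=> [/burn_stepP[->||[_ [z]]]|/set1P->]; rewrite ?inE ?eqxx.
Qed.

Lemma subset_burn_step B x : B \subset step B x.
Proof. by apply/subsetP=> y yB; rewrite !inE yB orbT. Qed.

Lemma burn_step_mono B B' x x' :
  B \subset B' -> (x \in B') || (x == x') -> step B x \subset step B' x'.
Proof.
move=> sBB' xB'; apply/subsetP=> y /burn_stepP[->|yB|[yS [z zB ezy]]].
- by case/orP: xB' => [/(subsetP (subset_burn_step _ _))|/eqP->] //; exact: mem_burn_step_src.
- exact: subsetP (subset_burn_step _ _) _ (subsetP sBB' _ yB).
- exact: mem_burn_step_nbr (subsetP sBB' _ zB) ezy yS.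
Qed.

Lemma burn_step_subset B x : B \subset S -> x \in S -> step B x \subset S.
Proof. by move=> sBS xS; apply/subsetP=> y /burn_stepP[->|/(subsetP sBS)|[]]. Qed.

Lemma subset_foldl_burn B ys : B \subset run B ys.
Proof.
elim: ys B => [|y ys IH] B /=; first exact: subxx.
exact: subset_trans (subset_burn_step B y) (IH _).
Qed.

Lemma foldl_burn_mono B B' ys : B \subset B' -> run B ys \subset run B' ys.
Proof.
elim: ys B B' => [|y ys IH] B B' //= sBB'.
by apply: IH; apply: burn_step_mono; rewrite // eqxx orbT.
Qed.

Lemma foldl_burn_take_mono B ys r r' :
  r <= r' -> run B (take r ys) \subset run B (take r' ys).
Proof.
move=> le_rr'; rewrite -[take r' ys](cat_take_drop r) take_takel // foldl_cat.
exact: subset_foldl_burn.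
Qed.

Lemma foldl_burn_take_nth B ys r d :
  r < size ys -> run B (take r.+1 ys) = step (run B (take r ys)) (nth d ys r).
Proof. by move=> lt_r; rewrite (take_nth d lt_r) -cats1 foldl_cat. Qed.

Definition burning_from B zs : Prop :=
  [/\ forall i d, i < size zs ->
        (nth d zs i \in S) /\ (nth d zs i \notin run B (take i zs)),
      run B zs = S &
      forall i, i < size zs -> run B (take i zs) != S].

Lemma burning_from_cons B x zs :
  x \in S -> x \notin B -> B != S -> burning_from (step B x) zs ->
  burning_from B (x :: zs).
Proof.
move=> xS xB BS [src all_burned not_early]; split=> //.
- by case=> [|i] d //=; apply: src.
- by case=> [|i] //=; apply: not_early.
Qed.

Lemma burning_seq_burning_from xs : burning_from set0 xs -> burning_seq S e xs.
Proof. by []. Qed.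

(* A source that is already burned can be replaced by any unburned vertex, and
   the process can be stopped as soon as everything is burned. *)
Lemma exists_burning_from B ys :
  B \subset S -> {subset ys <= S} -> S \subset run B ys ->
  exists2 zs, size zs <= size ys & burning_from B zs.
Proof.
elim: ys B => [|y ys IH] B sBS ysS /= sS.
  by exists [::] => //; rewrite (_ : B = S) //; apply/eqP; rewrite eqEsubset sBS.
have [->|BS] := eqVneq B S; first by exists [::].
have [x [xS xB yB_x]] : exists x, [/\ x \in S, x \notin B & (y \in B) || (y == x)].
  have [yB|yB] := boolP (y \in B); last by exists y; rewrite ysS ?mem_head ?eqxx ?orbT.
  have /set0Pn[x /setDP[xS xB]] : S :\: B != set0.
    by apply: contra BS; rewrite setD_eq0 => sSB; rewrite eqEsubset sBS.
  by exists x.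
have ysS' : {subset ys <= S} by move=> y' y'ys; apply: ysS; rewrite inE y'ys orbT.
have sS' : S \subset run (step B x) ys.
  exact: subset_trans sS (foldl_burn_mono _ (burn_step_mono (subxx B) yB_x)).
have [zs le_zs bzs] := IH _ (burn_step_subset sBS xS) ysS' sS'.
by exists (x :: zs); last exact: burning_from_cons.
Qed.

Lemma burning_seq_sub xs : burning_seq S e xs -> {subset xs <= S}.
Proof. by case=> src _ _ x /(nthP x)[i lt_i <-]; case: (src i x lt_i). Qed.

Lemma size_burning_seq_gt1 xs : burning_seq S e xs -> 1 < #|S| -> 1 < size xs.
Proof.
case: xs => [|x [|x' xs]] // [_ burned_all _]; rewrite -burned_all.
  by rewrite cards0.
by rewrite /burned /= burn_step_set0 cards1.
Qed.

Lemma exists_burning_number xs :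
  burning_seq S e xs -> exists k, is_burning_number S e k /\ k <= size xs.
Proof.
move=> bs; have [|k [[ys [bys <-]] le_k min_k]] :=
  @classical_ex_minn (fun k => exists ys, burning_seq S e ys /\ size ys = k) (size xs).
- by exists xs.
- by exists (size ys); split=> //; split=> [|zs bzs]; [exists ys | apply: min_k; exists zs].
Qed.

End Burning.

Section Simulation.
Variables (V : finType) (S S' : {set V}) (e e' : rel V) (u : V) (B0 : {set V}).
Hypotheses (uS : u \in S) (sS'S : S' \subset S).
Hypothesis B0_nbr_u : exists2 z, z \in B0 & e z u.
Hypothesis edge' : forall z y, e' z y -> e z y || e u y.
Local Notation run := (foldl (burn_step S e)).

Lemma mem_foldl_take_center xs r : 0 < r <= size xs -> u \in run B0 (take r xs).
Proof.
case/andP=> r_gt0 le_r; apply: (subsetP (foldl_burn_take_mono _ _ _ _ r_gt0)).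
rewrite (foldl_burn_take_nth _ _ _ u) ?(leq_trans r_gt0) // take0 /=.
by case: B0_nbr_u => z zB0 ezu; apply: mem_burn_step_nbr zB0 ezu uS.
Qed.

Lemma mem_foldl_take_nbr xs r y :
  1 < r <= size xs -> y \in S -> e u y -> y \in run B0 (take r xs).
Proof.
case/andP=> r_gt1 le_r yS euy; apply: (subsetP (foldl_burn_take_mono _ _ _ _ r_gt1)).
rewrite (foldl_burn_take_nth _ _ _ u) ?(leq_trans r_gt1) //.
apply: mem_burn_step_nbr euy yS; apply: mem_foldl_take_center.
by rewrite /= ltnW // (leq_trans r_gt1 le_r).
Qed.

(* Every round of the process on [(S', e')] is matched by the same round
   started from [B0]: an [e']-edge not in [e] starts at a neighbour of [u],
   and [u] is burned from the first round on. *)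
Lemma burned_sub_foldl_take xs r :
  r <= size xs -> burned S' e' (take r xs) \subset run B0 (take r xs).
Proof.
elim: r => [|r IH] le_r; first by rewrite take0; apply: sub0set.
have {}IH := IH (ltnW le_r); rewrite /burned in IH *.
rewrite !(foldl_burn_take_nth _ _ _ u) //.
apply/subsetP=> y /burn_stepP[->|/(subsetP IH) yB|[yS' [z zB e'zy]]].
- exact: mem_burn_step_src.
- exact: subsetP (subset_burn_step _ _ _ _) _ yB.
have yS := subsetP sS'S _ yS'.
case/orP: (edge' e'zy) => [ezy|euy]; first exact: mem_burn_step_nbr (subsetP IH _ zB) ezy yS.
apply: mem_burn_step_nbr euy yS; apply: mem_foldl_take_center; rewrite (ltnW le_r) andbT.
by case: r {IH le_r} zB => //; rewrite take0 inE.
Qed.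

End Simulation.

Lemma mem_zip (T1 T2 : eqType) (s1 : seq T1) (s2 : seq T2) a b :
  (a, b) \in zip s1 s2 -> a \in s1 /\ b \in s2.
Proof.
elim: s1 s2 => [|x s1 IH] [|y s2] //=.
by rewrite inE => /orP[/eqP[-> ->]|/IH[h1 h2]]; rewrite !inE ?eqxx ?h1 ?h2 ?orbT.
Qed.

Section Smoothing.
Variables (V : finType) (S : {set V}) (e : rel V) (w : V) (S' : {set V}) (e' : rel V).
Hypothesis smooth : smoothing_of S e w S' e'.

Lemma smoothing_sub : S' \subset S :\ w.
Proof.
case: smooth => _ [s [p [_ [_ -> _]]]].
by apply/subsetP=> x /setDP[].
Qed.

Lemma smoothing_cover : S \subset w |: (S' :|: nbrs S e w).
Proof.
case: smooth => _ [s [p [[_ s_nbrs _ _] [_ -> _]]]].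
apply/subsetP=> x xS; have [->|xw] := eqVneq x w; first by rewrite setU11.
rewrite -s_nbrs !inE (negPf xw) xS /= andbT orbC.
by have [//|xs] := boolP (x \in s); apply: contra xs => /mem_drop/mem_take.
Qed.

Lemma smoothing_edge x y : e' x y -> y \in S' /\ (e x y || e w y).
Proof.
case: smooth => _ [s [p [[_ s_nbrs s2 _] [_ _ e'E]]]].
rewrite e'E => /and3P[_ yS' /orP[exy|]]; first by rewrite exy.
have s_nbr z : z \in s -> e w z by rewrite -[z \in s]in_set s_nbrs inE => /andP[].
move=> P_edge; split=> //; apply/orP; right; apply: s_nbr.
have : y \in nth w s 0 :: drop (maxn p 2) s ++ [:: nth w s 1].
  by case/orP: P_edge => /mem_zip[]// _ /mem_behead.
rewrite inE mem_cat inE => /or3P[/eqP->|/mem_drop//|/eqP->]; apply: mem_nth => //.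
exact: leq_trans s2.
Qed.

Hypothesis e_irr : irreflexive e.

Lemma smoothing_card_gt1 : 1 < #|S'|.
Proof.
case: smooth => _ [s [p [[s_uniq s_nbrs s2 _] [_ S'E _]]]].
case: s s_uniq s_nbrs s2 S'E => [|a [|b t]] // uniq_abt nbrsE _ S'E.
have drop_sub : {subset drop 2 (take p [:: a, b & t]) <= t}.
  by move=> x; case: p {S'E} => [|[|q]] //=; rewrite drop0 => /mem_take.
have inS' c : c \in [:: a, b & t] -> c \notin t -> c \in S'.
  move=> cs ct; have : c \in nbrs S e w by rewrite -nbrsE inE.
  rewrite S'E !inE => /andP[cS ewc]; rewrite cS andbT (contra (@drop_sub c) ct) /=.
  by apply: contraTneq ewc => ->; rewrite e_irr.
move: uniq_abt; rewrite /= !inE negb_or => /and3P[/andP[ab a_t] b_t _].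
have ab_sub : [set a; b] \subset S'.
  by apply/subsetP=> c /set2P[]->; apply: inS'; rewrite ?mem_head // inE mem_head orbT.
by apply: leq_trans (subset_leq_card ab_sub); rewrite cards2 ab.
Qed.

End Smoothing.

Lemma smoothing_del_leaf (V : finType) (S : {set V}) (e : rel V) (u v : V)
    (S' : {set V}) (e' : rel V) :
  irreflexive e -> smoothing_of (S :\ v) (del_rel e v) u S' e' ->
  [/\ S' \subset S, forall z y, e' z y -> e z y || e u y, 1 < #|S'|
    & S :\ v \subset u |: (S' :|: [set y in S | e u y])].
Proof.
move=> e_irr smooth; have del_irr : irreflexive (del_rel e v).
  by move=> x; rewrite /del_rel /= e_irr !andbF.
split.
- exact: subset_trans (smoothing_sub smooth) (subset_trans (subD1set _ _) (subD1set _ _)).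
- by move=> z y /(smoothing_edge smooth)[_ /orP[]/and3P[_ _ ->]]; rewrite ?orbT.
- exact: smoothing_card_gt1 smooth del_irr.
apply: subset_trans (smoothing_cover smooth) _; apply/subsetP=> y.
by rewrite !inE => /or3P[->|->|/andP[/andP[_ ->] /and3P[_ _ ->]]]; rewrite ?orbT.
Qed.

Theorem mainTheorem8 (V : finType) (S : {set V}) (e : rel V) (u v : V)
    (S' : {set V}) (e' : rel V) (k' : nat) :
  is_tree S e ->
  u \in S -> 3 <= deg S e u ->
  leaf S e v -> e u v ->
  smoothing_of (S :\ v) (del_rel e v) u S' e' ->
  is_burning_number S' e' k' ->
  (exists k, is_burning_number S e k /\ k <= k'.+1) /\
  (exists xs, burning_seq S e (v :: xs) /\ size (v :: xs) <= k'.+1).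
Proof.
(* The degree bound only guarantees that the smoothing exists. *)
case=> [[e_sym e_irr _] _ _ _] uS _ /andP[vS _] euv smooth [[xs [bxs <-]] _].
have [sS'S edge' S'_gt1 cover_Sv] := smoothing_del_leaf e_irr smooth.
pose B0 := burn_step S e set0 v.
have B0_nbr_u : exists2 z, z \in B0 & e z u by exists v; rewrite ?mem_burn_step_src // e_sym.
have xs_gt1 : 1 < size xs := size_burning_seq_gt1 bxs S'_gt1.
have cover : S \subset foldl (burn_step S e) B0 xs.
  apply/subsetP=> x xS; rewrite -(take_size xs).
  have [->|xv] := eqVneq x v.
    exact: subsetP (subset_foldl_burn _ _ _ _) _ (mem_burn_step_src _ _ _ _).
  have /(subsetP cover_Sv) : x \in S :\ v by rewrite !inE xv.
  rewrite !inE => /or3P[/eqP->|xS'|/andP[_ eux]].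
  - by apply: (mem_foldl_take_center uS B0_nbr_u); rewrite leqnn ltnW.
  - apply: (subsetP (burned_sub_foldl_take uS sS'S B0_nbr_u edge' (leqnn _))).
    by rewrite take_size; case: bxs => _ ->.
  - by apply: (mem_foldl_take_nbr uS B0_nbr_u); rewrite ?xs_gt1 ?leqnn.
have xsS : {subset xs <= S} by move=> x /(burning_seq_sub bxs)/(subsetP sS'S).
have [zs le_zs bzs] := exists_burning_from (burn_step_subset e (sub0set S) vS) xsS cover.
have bvzs : burning_seq S e (v :: zs).
  apply/burning_seq_burning_from/burning_from_cons => //; rewrite ?inE //.
  by apply/eqP=> S0; move: vS; rewrite -S0 inE.
split; last by exists zs.
have [k [bk le_k]] := exists_burning_number bvzs.
by exists k; split=> //; apply: leq_trans le_k _.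
Qed.
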